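(* Let $V$ be a Whittaker module of type $\eta$ over $R$ with cyclic Whittaker vector $w$, and let \[ X=\{v\in R(F,H) : (x\bullet v)w=0 \text{ for all } x\in R(E)\}. \] Then $X=\tilde A\,W_V(F,H)+W(F,H)$, where $\tilde A\,W_V(F,H)$ is the linear span of products $ab$ with $a\in\tilde A$, $b\in W_V(F,H)$. Moreover $R_w(F,H)\subseteq X$ and $R_w(F,H)=\tilde A\,W_V(F,H)$.
   Context: Let $f\in\mathbb{C}[H]$ be a polynomial. $R=R(f)$ is the associative $\mathbb{C}$-algebra generated by $E,F,H$ with relations $EF-FE=f(H)$, $HE-EH=E$, $HF-FH=-F$; the monomials $F^iH^jE^k$ form a basis of $R$. $Z(R)$ is the center of $R$ (equal to $\mathbb{C}[\Omega]$, $\Omega=2FE+u(H+1)$ where $f(H)=\tfrac12(u(H+1)-u(H))$). Let $R(E)=\mathbb{C}[E]$, $R(F,H)$ the subalgebra generated by $F,H$, and $\tilde A=\mathbb{C}[H]$ the subalgebra generated by $H$. Fix an algebra homomorphism $\eta:R(E)\to\mathbb{C}$ with $\eta(E)\neq0$ and let $R_\eta(E)=\ker\eta$. Then $R=R(F,H)\oplus R\,R_\eta(E)$; for $u\in R$, $u^\eta$ denotes its $R(F,H)$-component. $W(F,H)=\{z^\eta:z\in Z(R)\}$. The $\eta$-reduced action is $x\bullet v=(xv)^\eta-\eta(x)v$ for $x\in R(E)$, $v\in R(F,H)$. A vector $v$ of an $R$-module $V$ is a Whittaker vector of type $\eta$ if $Ev=\eta(E)v$; $V$ is a Whittaker module of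 type $\eta$ with cyclic Whittaker vector $w$ if $w$ is a Whittaker vector and $V=Rw$. $Z_V=\mathrm{Ann}_R(V)\cap Z(R)$, $W_V(F,H)=\{z^\eta: z\in Z_V\}$, $R_w=\mathrm{Ann}_R(w)$ and $R_w(F,H)=R_w\cap R(F,H)$. *)

(* The base field C is taken to be  R[i]  (mathcomp-real_closed
   complex numbers) for an arbitrary  R : realType  (a complete archimedean
   ordered field, i.e. the real numbers); hence R[i] is the field of complex
   numbers. *)
From HB Require Import structures.
From mathcomp Require Import all_boot all_order all_algebra.
From mathcomp Require Import reals.
From mathcomp Require Import complex.
Set Implicit Arguments. Unset Strict Implicit. Unset Printing Implicit Defensive.
Import Order.TTheory GRing.Theory Num.Theory.
Local Open Scope ring_scope.

Section GWA.
Variable (C : fieldType) (A : algType C).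

Definition peval (p : {poly C}) (x : A) : A := horner_alg x p.

Definition mono (E F H : A) (i j k : nat) : A := F ^+ i * H ^+ j * E ^+ k.

Definition mono_basis (E F H : A) : Prop :=
  (forall x : A, exists (n : nat) (c : 'I_n -> C) (t : 'I_n -> nat * nat * nat),
      x = \sum_(l < n) c l *: mono E F H (t l).1.1 (t l).1.2 (t l).2) /\
  (forall (n : nat) (c : 'I_n -> C) (t : 'I_n -> nat * nat * nat),
      injective t ->
      \sum_(l < n) c l *: mono E F H (t l).1.1 (t l).1.2 (t l).2 = 0 ->
      forall l, c l = 0).

(* A is (a copy of) the algebra R(f): generated by E, F, H subject to
   EF - FE = f(H), HE - EH = E, HF - FH = -F, with PBW basis F^i H^j E^k. *)
Definition is_Rf (f : {poly C}) (E F H : A) : Prop :=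
  [/\ E * F - F * E = peval f H,
      H * E - E * H = E,
      H * F - F * H = - F &
      mono_basis E F H].

Definition central (z : A) : Prop := forall y : A, z * y = y * z.

Definition lspan (P : A -> Prop) (x : A) : Prop :=
  exists (n : nat) (c : 'I_n -> C) (y : 'I_n -> A),
    (forall l, P (y l)) /\ x = \sum_(l < n) c l *: y l.

Definition subalg_closed_set (S : A -> Prop) : Prop :=
  [/\ S 1, (forall x y, S x -> S y -> S (x + y)),
      (forall (c : C) x, S x -> S (c *: x)) &
      (forall x y, S x -> S y -> S (x * y))].

Definition RFH (F H : A) (x : A) : Prop :=
  forall S : A -> Prop, subalg_closed_set S -> S F -> S H -> S x.

Definition Atilde (H : A) (x : A) : Prop := exists p : {poly C}, x = peval p H.

(* The eta homomorphism R(E) = C[E] -> C is determined by a = eta(E):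
   eta(p(E)) = p(a).  R_eta(E) = ker eta = { p(E) : p(a) = 0 }. *)
Definition Reta (E : A) (a : C) (x : A) : Prop :=
  exists p : {poly C}, p.[a] = 0 /\ x = peval p E.

Definition RReta (E : A) (a : C) : A -> Prop :=
  lspan (fun x => exists r k, Reta E a k /\ x = r * k).

(* v = u^eta : v is the R(F,H)-component of u in R = R(F,H) (+) R R_eta(E). *)
Definition eta_part (E F H : A) (a : C) (u v : A) : Prop :=
  RFH F H v /\ RReta E a (u - v).

Definition Wset (E F H : A) (a : C) (v : A) : Prop :=
  exists z, central z /\ eta_part E F H a z v.

Variable V : lmodType A.

Definition annV (r : A) : Prop := forall v : V, r *: v = 0.

Definition WVset (E F H : A) (a : C) (v : A) : Prop :=
  exists z, (central z /\ annV z) /\ eta_part E F H a z v.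

Definition whittaker_vector (E : A) (a : C) (w : V) : Prop := E *: w = a%:A *: w.
Definition cyclic_whittaker (E : A) (a : C) (w : V) : Prop :=
  whittaker_vector E a w /\ forall v : V, exists r : A, v = r *: w.

Definition RwFH (F H : A) (w : V) (x : A) : Prop := RFH F H x /\ x *: w = 0.

Definition AWV (E F H : A) (a : C) : A -> Prop :=
  lspan (fun x => exists a' b, Atilde H a' /\ WVset E F H a b /\ x = a' * b).

(* The set X = { v in R(F,H) : (x . v) w = 0 for all x in R(E) },
   with x . v = (x v)^eta - eta(x) v and x = p(E), eta(x) = p(a). *)
Definition Xset (E F H : A) (a : C) (w : V) (v : A) : Prop :=
  RFH F H v /\
  forall (p : {poly C}) (u : A), eta_part E F H a (peval p E * v) u ->
    (u - p.[a] *: v) *: w = 0.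

End GWA.

(* Take a polynomial G with G(X - 1) - G(X) = -f(X), which exists in characteristic 0;
   then the Casimir element FE + G(H) is central, and its eta-part
   omega = a F + G(H) (a = eta(E)) differs from it by an element of R (E - a).
   Every element of R(F,H) is a sum of terms p(H) omega^k.  On a Whittaker vector y,
   (E - a) p(H) y = a (p(X - 1) - p(X))(H) y, so (E - a)^d annihilates p(H) omega^k w
   when deg p < d and multiplies the H^d-part of v = sum p_l(H) omega^(k_l) by
   (-a)^d d!, turning it into a multiple of z w for a central z = sum c_l Omega^(k_l).
   When v w is a Whittaker vector and d > 0 this forces z w = 0, so z annihilates the
   cyclic module V and H^d z^eta lies in Atilde W_V(F,H); induction on the degree in H
   ends with a term z^eta in W(F,H).  The set X is exactly the set of v in R(F,H) for
   which v w is a Whittaker vector, which gives the remaining statements. *)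

From HB Require Import structures.
From mathcomp Require Import all_boot all_order all_algebra.
From mathcomp Require Import reals complex ring.
Set Implicit Arguments. Unset Strict Implicit. Unset Printing Implicit Defensive.
Import Order.TTheory GRing.Theory Num.Theory.
Local Open Scope ring_scope.

Section ShiftDifference.
Variable C : fieldType.
Implicit Types p q : {poly C}.

Definition pdelta p := p \Po ('X - 1%:P) - p.

Lemma pdeltaD p q : pdelta (p + q) = pdelta p + pdelta q.
Proof. by rewrite /pdelta comp_polyD opprD addrACA. Qed.

Lemma pdeltaZ (c : C) p : pdelta (c *: p) = c *: pdelta p.
Proof. by rewrite /pdelta comp_polyZ scalerBr. Qed.

Lemma size_pdelta p n : (size p <= n.+1)%N -> (size (pdelta p) <= n)%N.
Proof.
have sX1 : size ('X - 1%:P : {poly C}) = 2 by exact: size_XsubC.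
have size_comp : size (p \Po ('X - 1%:P)) = size p by exact: size_comp_poly2.
move=> sp; apply/leq_sizeP => j; rewrite leq_eqVlt coefB => /orP[/eqP <- | ltj]; last first.
  by rewrite !nth_default ?subrr ?size_comp ?(leq_trans sp).
move: sp; rewrite leq_eqVlt => /orP[/eqP sp | sp]; last by rewrite !nth_default ?subrr ?size_comp.
have := @lead_coef_comp _ p ('X - 1%:P); rewrite sX1 lead_coefXsubC expr1n mulr1.
by rewrite !lead_coefE size_comp sp => /(_ isT) ->; rewrite subrr.
Qed.

Lemma coef_exp_XsubC_pred (c : C) n : (('X - c%:P) ^+ n.+1)`_n = - (n.+1%:R * c).
Proof.
elim: n => [|n IH]; first by rewrite expr1 coefB coefX coefC /= sub0r mul1r.
have top : (('X - c%:P) ^+ n.+1)`_n.+1 = 1.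
  by have /monicP := monic_exp n.+1 (monicXsubC c); rewrite lead_coefE size_exp_XsubC.
rewrite exprSr mulrBr coefB coefMX coefMC /= IH top -[n.+2]addn1 natrD; ring.
Qed.

Lemma size_sub_top p d : (size p <= d.+1)%N -> (size (p - p`_d *: 'X^d)%R <= d)%N.
Proof.
move=> sp; apply/leq_sizeP => j; rewrite leq_eqVlt => /orP[/eqP <-|ltj].
  by rewrite coefB coefZ coefXn eqxx mulr1 subrr.
by rewrite coefB coefZ coefXn gtn_eqF // mulr0 subr0 nth_default // (leq_trans sp).
Qed.

Lemma coef_pdelta_top p d : (size p <= d.+2)%N ->
  (pdelta p)`_d = - d.+1%:R * p`_d.+1.
Proof.
move=> sp; set q := p - p`_d.+1 *: 'X^(d.+1).
have sq : (size q <= d.+1)%N by exact: size_sub_top.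
have dq0 : (pdelta q)`_d = 0 by rewrite nth_default // size_pdelta.
have -> : pdelta p = pdelta q + p`_d.+1 *: pdelta 'X^(d.+1).
  by rewrite -pdeltaZ -pdeltaD subrK.
rewrite coefD coefZ dq0 add0r /pdelta comp_Xn_poly coefB coef_exp_XsubC_pred.
by rewrite coefXn ltn_eqF // subr0; ring.
Qed.

Lemma iter_pdelta p d : (size p <= d.+1)%N ->
  iter d pdelta p = ((-1) ^+ d * d`!%:R * p`_d)%:P.
Proof.
elim: d p => [|d IH] p sp; first by rewrite /= mul1r mul1r -size1_polyC.
rewrite iterSr IH; last exact: size_pdelta.
by rewrite coef_pdelta_top // factS natrM exprSr; congr _%:P; ring.
Qed.

Lemma pdelta_surj : [pchar C] =i pred0 -> forall p, exists g, pdelta g = p.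
Proof.
move=> /pcharf0P C0 p; elim: {p}(size p) {-2}p (leqnn (size p)) => [|n IH] p sp.
  by exists 0; move: sp; rewrite size_poly_leq0 /pdelta comp_poly0 subr0 => /eqP ->.
have cX : (pdelta 'X^(n.+1))`_n = - n.+1%:R :> C.
  by rewrite coef_pdelta_top ?size_polyXn // coefXn eqxx mulr1.
have cX_neq0 : - n.+1%:R != 0 :> C by rewrite oppr_eq0 C0.
set k := p`_n / - n.+1%:R.
have [|g dg] := IH (p - k *: pdelta 'X^(n.+1)).
  apply/leq_sizeP => j; rewrite leq_eqVlt => /orP[/eqP <-|ltj].
    by rewrite coefB coefZ cX divfK // subrr.
  rewrite coefB coefZ !nth_default ?mulr0 ?subr0 ?(leq_trans sp) //.
  by rewrite (leq_trans _ ltj) // size_pdelta // size_polyXn.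
by exists (g + k *: 'X^(n.+1)); rewrite pdeltaD pdeltaZ dg subrK.
Qed.

End ShiftDifference.

Arguments pdelta {C} p.

Section AlgebraFacts.
Variables (C : fieldType) (A : algType C).
Implicit Types (p q : {poly C}) (x y z e r : A).

Lemma peval0 x : peval 0 x = 0.
Proof. exact: rmorph0. Qed.
Lemma peval1 x : peval 1 x = 1.
Proof. exact: rmorph1. Qed.
Lemma pevalD p q x : peval (p + q) x = peval p x + peval q x.
Proof. exact: rmorphD. Qed.
Lemma pevalB p q x : peval (p - q) x = peval p x - peval q x.
Proof. exact: rmorphB. Qed.
Lemma pevalM p q x : peval (p * q) x = peval p x * peval q x.
Proof. exact: rmorphM. Qed.
Lemma pevalC (c : C) x : peval c%:P x = c%:A.
Proof. exact: horner_algC. Qed.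
Lemma pevalZ (c : C) p x : peval (c *: p) x = c *: peval p x.
Proof. by rewrite -mul_polyC pevalM pevalC mulr_algl. Qed.
Lemma pevalX x : peval 'X x = x.
Proof. exact: horner_algX. Qed.
Lemma pevalXn n x : peval 'X^n x = x ^+ n.
Proof. by rewrite /peval rmorphXn /= horner_algX. Qed.

Lemma peval_MXaddC p (c : C) x : peval (p * 'X + c%:P) x = peval p x * x + c%:A.
Proof. by rewrite pevalD pevalM pevalX pevalC. Qed.

Lemma comm_peval p x y : GRing.comm x y -> GRing.comm x (peval p y).
Proof.
move=> cxy; elim/poly_ind: p => [|p c IH]; first by rewrite peval0; exact: commr0.
by rewrite peval_MXaddC; apply: commrD; [apply: commrM | apply: commr_sym; apply: comm_alg].
Qed.

Lemma peval_shiftl p (c : C) x y : y * x = (x - c%:A) * y ->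
  y * peval p x = peval (p \Po ('X - c%:P)) x * y.
Proof.
move=> yx; elim/poly_ind: p => [|p k IH]; first by rewrite comp_poly0 !peval0 mulr0 mul0r.
rewrite comp_poly_MXaddC peval_MXaddC pevalD pevalM pevalB pevalX !pevalC.
rewrite mulrDr mulrDl mulrA IH.
by rewrite -!mulrA yx mulr_algl mulr_algr.
Qed.

Lemma peval_shiftr p (c : C) x y : x * y = y * (x - c%:A) ->
  peval p x * y = y * peval (p \Po ('X - c%:P)) x.
Proof.
move=> xy; elim/poly_ind: p => [|p k IH]; first by rewrite comp_poly0 !peval0 mulr0 mul0r.
rewrite comp_poly_MXaddC peval_MXaddC pevalD pevalM pevalB pevalX !pevalC.
rewrite mulrDr mulrDl -mulrA xy.
by rewrite !mulrA IH mulr_algl mulr_algr.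
Qed.

Lemma peval_subr_lideal p x y e r : GRing.comm x e -> x - y = r * e ->
  exists r', peval p x - peval p y = r' * e.
Proof.
move=> cxe xy; elim/poly_ind: p => [|p c [r' IH]].
  by exists 0; rewrite !peval0 subrr mul0r.
exists (r' * x + peval p y * r).
rewrite !peval_MXaddC opprD addrACA subrr addr0 mulrDl -[r' * x * e]mulrA cxe mulrA -IH.
by rewrite -[peval p y * r * e]mulrA -xy mulrBl mulrBr addrA subrK.
Qed.

End AlgebraFacts.

Section Closures.
Variables (C : fieldType) (A : algType C).
Implicit Types (x y z : A).

Section LinearSpan.
Variable P : A -> Prop.

Lemma lspan0 : lspan P 0.
Proof. by exists 0%N, (fun _ => 0), (fun _ => 0); split; [case | rewrite big_ord0]. Qed.

Lemma lspan_of x : P x -> lspan P x.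
Proof. by exists 1%N, (fun _ => 1), (fun _ => x); rewrite big_ord1 scale1r. Qed.

Lemma lspanD x y : lspan P x -> lspan P y -> lspan P (x + y).
Proof.
move=> [n1 [c1 [y1 [Py1 ->]]]] [n2 [c2 [y2 [Py2 ->]]]].
pose glue T (g1 : 'I_n1 -> T) (g2 : 'I_n2 -> T) l :=
  match split l with inl i => g1 i | inr j => g2 j end.
exists (n1 + n2)%N, (glue _ c1 c2), (glue _ y1 y2); split.
  by move=> l; rewrite /glue; case: (split l).
rewrite big_split_ord /glue; congr (_ + _); apply: eq_bigr => i _.
  by rewrite (unsplitK (inl _ i)).
by rewrite (unsplitK (inr _ i)).
Qed.

Lemma lspan_ind (Q : A -> Prop) : Q 0 -> (forall x y, Q x -> Q y -> Q (x + y)) ->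
  (forall (c : C) x, Q x -> Q (c *: x)) -> (forall x, P x -> Q x) ->
  forall x, lspan P x -> Q x.
Proof.
move=> Q0 QD QZ PQ x [n [c [y [Py ->]]]].
by elim/big_ind: _ => // i _; apply/QZ/PQ.
Qed.

End LinearSpan.

Section SubalgebraFH.
Variables F H : A.

Lemma RFH_F : RFH F H F. Proof. by move=> S _ SF _. Qed.
Lemma RFH_H : RFH F H H. Proof. by move=> S _ _ SH. Qed.
Lemma RFH1 : RFH F H 1. Proof. by move=> S [S1 _ _ _]. Qed.
Lemma RFHD x y : RFH F H x -> RFH F H y -> RFH F H (x + y).
Proof. by move=> Sx Sy S cS SF SH; case: (cS) => _ SD _ _; apply: SD; [apply: Sx | apply: Sy]. Qed.
Lemma RFHZ (c : C) x : RFH F H x -> RFH F H (c *: x).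
Proof. by move=> Sx S cS SF SH; case: (cS) => _ _ SZ _; apply: SZ; apply: Sx. Qed.
Lemma RFHM x y : RFH F H x -> RFH F H y -> RFH F H (x * y).
Proof. by move=> Sx Sy S cS SF SH; case: (cS) => _ _ _ SM; apply: SM; [apply: Sx | apply: Sy]. Qed.
Lemma RFH0 : RFH F H 0.
Proof. by have := RFHZ 0 RFH1; rewrite scale0r. Qed.

Lemma RFH_peval (p : {poly C}) x : RFH F H x -> RFH F H (peval p x).
Proof.
move=> Sx; elim/poly_ind: p => [|p c IH]; first by rewrite peval0; exact: RFH0.
rewrite peval_MXaddC; apply: RFHD; first exact: RFHM.
by apply: RFHZ; exact: RFH1.
Qed.

Lemma RFH_lmul_ind (P : A -> Prop) : P 1 ->
  (forall x y, P x -> P y -> P (x + y)) -> (forall (c : C) x, P x -> P (c *: x)) ->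
  (forall x, P x -> P (F * x)) -> (forall x, P x -> P (H * x)) ->
  forall x, RFH F H x -> P x.
Proof.
move=> P1 PD PZ PF PH x Sx; rewrite -[x]mulr1.
apply: (Sx (fun x => forall y, P y -> P (x * y))) P1 => [|y|y]; last 2 first.
- exact: PF.
- exact: PH.
split=> [y|x1 x2 P1y P2y y Py|c x1 Py y Pyy|x1 x2 P1y P2y y Py].
- by rewrite mul1r.
- by rewrite mulrDl; apply: PD; [apply: P1y | apply: P2y].
- by rewrite -scalerAl; apply/PZ/Py.
- by rewrite -mulrA; apply/P1y/P2y.
Qed.

End SubalgebraFH.

Lemma central0 : central (0 : A).
Proof. by move=> y; rewrite mul0r mulr0. Qed.

Lemma central_peval (p : {poly C}) x : central x -> central (peval p x).
Proof. by move=> cx y; apply/commr_sym/comm_peval/commr_sym/cx. Qed.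

End Closures.

Section WhittakerVectors.
Variables (C : fieldType) (A : algType C) (V : lmodType A) (E F H : A) (a : C).
Implicit Types (x z v : A) (y w : V).

Lemma scale_alg_eq0 (c : C) y : c != 0 -> c%:A *: y = 0 -> y = 0.
Proof.
move=> c_neq0 cy; rewrite -[y]scale1r -(scale1r 1) -(mulVf c_neq0) -scalerA -mulr_algl.
by rewrite -scalerA cy !scaler0.
Qed.

Lemma whittaker_vector0 : whittaker_vector E a (0 : V).
Proof. by rewrite /whittaker_vector !scaler0. Qed.

Lemma peval_whittaker (p : {poly C}) y :
  whittaker_vector E a y -> peval p E *: y = p.[a]%:A *: y.
Proof.
move=> Ey; elim/poly_ind: p => [|p c IH]; first by rewrite peval0 horner0 !scale0r.
rewrite peval_MXaddC hornerMXaddC !scalerDl -scalerA Ey scalerA -comm_alg.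
rewrite -[in LHS]scalerA IH scalerA; congr (_ *: _ + _).
by rewrite mulr_algl scalerA mulrC.
Qed.

Lemma whittaker_vector_central z y :
  central z -> whittaker_vector E a y -> whittaker_vector E a (z *: y).
Proof. by move=> cz Ey; rewrite /whittaker_vector !scalerA -cz comm_alg -!scalerA Ey. Qed.

Lemma Reta_subr : Reta E a (E - a%:A).
Proof. by exists ('X - a%:P); rewrite hornerXsubC subrr pevalB pevalX pevalC. Qed.

Lemma RReta_lideal r : RReta E a (r * (E - a%:A)).
Proof. by apply: lspan_of; exists r, (E - a%:A); split => //; exact: Reta_subr. Qed.

Lemma RReta_whittaker x y : whittaker_vector E a y -> RReta E a x -> x *: y = 0.
Proof.
move=> Ey; apply: (@lspan_ind _ _ _ (fun x => x *: y = 0)).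
- by rewrite scale0r.
- by move=> x1 x2 x1y x2y; rewrite scalerDl x1y x2y addr0.
- by move=> c x1 x1y; rewrite -mulr_algl -scalerA x1y scaler0.
- by move=> _ [r [k [[p [pa0 ->]] ->]]]; rewrite -scalerA peval_whittaker // pa0 !scale0r scaler0.
Qed.

Lemma eta_part_whittaker z v y :
  whittaker_vector E a y -> eta_part E F H a z v -> v *: y = z *: y.
Proof. by move=> Ey [_ /(RReta_whittaker Ey) /eqP]; rewrite scalerBl subr_eq0 => /eqP. Qed.

Lemma annV_cyclic z w : cyclic_whittaker E a w -> central z -> z *: w = 0 -> annV V z.
Proof. by move=> [_ gen] cz zw y; have [r ->] := gen y; rewrite scalerA cz -scalerA zw scaler0. Qed.

Lemma Wset0 : Wset E F H a 0.
Proof.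
by exists 0; split; [exact: central0 | split; [exact: RFH0 | rewrite subr0; exact: lspan0]].
Qed.

Lemma Wset_whittaker v w : whittaker_vector E a w -> Wset E F H a v ->
  RFH F H v /\ whittaker_vector E a (v *: w).
Proof.
move=> Ew [z [cz zv]]; split; first by case: zv.
by rewrite (eta_part_whittaker Ew zv); exact: whittaker_vector_central.
Qed.

Lemma AWV_WVset v : WVset V E F H a v -> AWV V E F H a v.
Proof.
by move=> Wv; apply: lspan_of; exists 1, v; rewrite mul1r; split => //; exists 1; rewrite peval1.
Qed.

Lemma AWV_RwFH v w : whittaker_vector E a w -> AWV V E F H a v -> RwFH F H w v.
Proof.
move=> Ew; apply: (@lspan_ind _ _ _ (RwFH F H w)).
- by split; [exact: RFH0 | rewrite scale0r].
- by move=> x1 x2 [S1 x1w] [S2 x2w]; split; [exact: RFHD | rewrite scalerDl x1w x2w addr0].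
- by move=> c x1 [S1 x1w]; split; [exact: RFHZ | rewrite -mulr_algl -scalerA x1w scaler0].
move=> _ [_ [b [[p ->] [Wb ->]]]].
case: Wb => z [[_ zV] zb]; split.
  by apply: RFHM; [apply: RFH_peval; exact: RFH_H | case: zb].
by rewrite -scalerA (eta_part_whittaker Ew zb) zV scaler0.
Qed.

Lemma Xset_of_whittaker v w : whittaker_vector E a w ->
  RFH F H v -> whittaker_vector E a (v *: w) -> Xset E F H a w v.
Proof.
move=> Ew Sv Evw; split => // p u pv.
rewrite scalerBl (eta_part_whittaker Ew pv) -scalerA peval_whittaker //.
by rewrite -[p.[a] *: v]mulr_algl -scalerA subrr.
Qed.

End WhittakerVectors.

Section Rf.
Variables (C : fieldType) (A : algType C) (f : {poly C}) (E F H : A).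
Hypothesis Rf : is_Rf f E F H.

Lemma mulEF : E * F = F * E + peval f H.
Proof. by case: Rf => EF _ _ _; rewrite -EF addrC subrK. Qed.

Lemma mulEH : E * H = (H - 1%:A) * E.
Proof. by case: Rf => _ HE _ _; rewrite scale1r mulrBl mul1r -{3}HE opprB addrC subrK. Qed.

Lemma mulHF : H * F = F * (H - 1%:A).
Proof. by case: Rf => _ _ HF _; rewrite scale1r mulrBr mulr1 -HF addrC subrK. Qed.

Lemma mulFH : F * H = (H - (-1)%:A) * F.
Proof. by rewrite scaleN1r opprK mulrDl mul1r mulHF scale1r mulrBr mulr1 subrK. Qed.

Lemma E_RFH_decomposition x : RFH F H x ->
  exists u1 u2, [/\ RFH F H u1, RFH F H u2 & E * x = u1 + u2 * E].
Proof.
move: x; suff decomp : forall x, RFH F H x -> RFH F H x /\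
  exists u1 u2, [/\ RFH F H u1, RFH F H u2 & E * x = u1 + u2 * E].
  by move=> x /decomp[].
apply: RFH_lmul_ind.
- split; first exact: RFH1.
  by exists 0, 1; rewrite mulr1 mul1r add0r; split; [exact: RFH0 | exact: RFH1 |].
- move=> x y [Sx [u1 [u2 [S1 S2 Ex]]]] [Sy [u1' [u2' [S1' S2' Ey]]]].
  split; first exact: RFHD.
  by exists (u1 + u1'), (u2 + u2'); rewrite mulrDr Ex Ey mulrDl addrACA; split=> //; exact: RFHD.
- move=> c x [Sx [u1 [u2 [S1 S2 Ex]]]]; split; first exact: RFHZ.
  by exists (c *: u1), (c *: u2); rewrite -scalerAr Ex scalerDr scalerAl; split=> //; exact: RFHZ.
- move=> x [Sx [u1 [u2 [S1 S2 Ex]]]]; split; first by apply: RFHM => //; exact: RFH_F.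
  exists (F * u1 + peval f H * x), (F * u2).
  have Sf : RFH F H (peval f H) by apply: RFH_peval; exact: RFH_H.
  have SF : RFH F H F by exact: RFH_F.
  rewrite mulrA mulEF mulrDl -mulrA Ex mulrDr mulrA addrAC -addrA.
  by split=> //; [apply: RFHD | ]; apply: RFHM.
- move=> x [Sx [u1 [u2 [S1 S2 Ex]]]]; split; first by apply: RFHM => //; exact: RFH_H.
  have SH1 : RFH F H (H - 1%:A).
    by apply: RFHD; [exact: RFH_H | rewrite -scaleNr; apply: RFHZ; exact: RFH1].
  exists ((H - 1%:A) * u1), ((H - 1%:A) * u2).
  rewrite mulrA mulEH -mulrA Ex mulrDr mulrA; split=> //; exact: RFHM.
Qed.

Variable G : {poly C}.
Hypothesis G_pdelta : pdelta G = - f.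

(* Half of the paper's Casimir 2FE + u(H + 1), with G(X) = u(X + 1) / 2. *)
Definition casimir := F * E + peval G H.

Lemma peval_G_shift : peval (G \Po ('X - 1%:P)) H = peval G H - peval f H.
Proof. by move/eqP: G_pdelta; rewrite subr_eq [- f + _]addrC => /eqP ->; rewrite pevalB. Qed.

Lemma casimir_comm_E : GRing.comm casimir E.
Proof.
rewrite /GRing.comm /casimir mulrDl mulrDr mulrA mulEF (peval_shiftl _ mulEH) peval_G_shift.
by rewrite mulrDl mulrBl addrA addrAC addrK.
Qed.

Lemma casimir_comm_F : GRing.comm casimir F.
Proof.
rewrite /GRing.comm /casimir mulrDl mulrDr -mulrA mulEF (peval_shiftr _ mulHF) peval_G_shift.
by rewrite mulrDr mulrBr addrA addrAC addrK.
Qed.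

Lemma casimir_comm_H : GRing.comm casimir H.
Proof.
rewrite /GRing.comm /casimir mulrDl mulrDr -mulrA mulEH !mulrA -mulHF.
by rewrite (comm_peval _ (commr_refl H)).
Qed.

Lemma casimir_central : central casimir.
Proof.
move=> y; case: Rf => _ _ _ [span _]; have [n [c [t ->]]] := span y.
apply: commr_sum => l _; rewrite /GRing.comm -scalerAl -scalerAr; congr (_ *: _).
by apply: commrM; [apply: commrM|]; apply: commrX;
  [exact: casimir_comm_F | exact: casimir_comm_H | exact: casimir_comm_E].
Qed.

Section WhittakerModule.
Variables (a : C) (V : lmodType A) (w : V).
Hypotheses (C0 : [pchar C] =i pred0) (a_neq0 : a != 0) (w_cyclic : cyclic_whittaker E a w).

Implicit Types (d : nat) (x : A) (p : {poly C}) (s : seq ({poly C} * nat)) (y : V).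

Local Notation hsize_le d s := (all (fun pe : {poly C} * nat => size pe.1 <= d)%N s).

Let Ew : whittaker_vector E a w. Proof. by case: w_cyclic. Qed.

Definition casimir_eta := a *: F + peval G H.

Lemma casimir_subr_eta : casimir - casimir_eta = F * (E - a%:A).
Proof. by rewrite /casimir /casimir_eta opprD addrACA subrr addr0 mulrBr mulr_algr. Qed.

Lemma RFH_casimir_eta : RFH F H casimir_eta.
Proof. by apply: RFHD; [apply: RFHZ; exact: RFH_F | apply: RFH_peval; exact: RFH_H]. Qed.

Lemma eta_part_casimir p : eta_part E F H a (peval p casimir) (peval p casimir_eta).
Proof.
split; first by apply: RFH_peval; exact: RFH_casimir_eta.
have [r ->] := peval_subr_lideal p (casimir_central (E - a%:A)) casimir_subr_eta.
exact: RReta_lideal.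
Qed.

Lemma F_eta : F = a^-1 *: (casimir_eta - peval G H).
Proof. by rewrite /casimir_eta addrK scalerA mulVf // scale1r. Qed.

Definition eta_expansion (s : seq ({poly C} * nat)) : A :=
  \sum_(pe <- s) peval pe.1 H * casimir_eta ^+ pe.2.

Lemma eta_expansion_cat s t : eta_expansion (s ++ t) = eta_expansion s + eta_expansion t.
Proof. exact: big_cat. Qed.

Lemma eta_expansion_lmul x g :
  (forall pe, x * (peval pe.1 H * casimir_eta ^+ pe.2) = eta_expansion (g pe)) ->
  forall s, x * eta_expansion s = eta_expansion (flatten (map g s)).
Proof.
move=> xg; elim=> [|pe s IH]; first by rewrite /eta_expansion big_nil mulr0.
by rewrite /= eta_expansion_cat -IH -xg /eta_expansion big_cons mulrDr.
Qed.

Lemma RFH_eta_expansion x : RFH F H x -> exists s, x = eta_expansion s.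
Proof.
move: x; apply: RFH_lmul_ind.
- by exists [:: (1, 0%N)]; rewrite /eta_expansion big_seq1 peval1 mulr1.
- by move=> _ _ [s ->] [t ->]; exists (s ++ t); rewrite eta_expansion_cat.
- move=> c _ [s ->]; exists (flatten (map (fun pe => [:: (c *: pe.1, pe.2)]) s)).
  rewrite -mulr_algl; apply: eta_expansion_lmul => pe.
  by rewrite /eta_expansion big_seq1 pevalZ mulr_algl scalerAl.
- move=> _ [s ->]; set sh := ('X - (-1)%:P : {poly C}).
  exists (flatten (map (fun pe => [:: (a^-1 *: (pe.1 \Po sh), pe.2.+1);
                                      (- a^-1 *: ((pe.1 \Po sh) * G), pe.2)]) s)).
  apply: eta_expansion_lmul => pe.
  rewrite /eta_expansion big_cons big_seq1 mulrA (peval_shiftl _ mulFH) -mulrA {1}F_eta.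
  rewrite /= -/sh !pevalZ pevalM -scalerAl mulrBl -exprS -scalerAr mulrBr scalerBr.
  by rewrite -!scalerAl scaleNr mulrA.
- move=> _ [s ->]; exists (flatten (map (fun pe => [:: ('X * pe.1, pe.2)]) s)).
  apply: eta_expansion_lmul => pe.
  by rewrite /eta_expansion big_seq1 pevalM pevalX mulrA.
Qed.

Lemma whittaker_pdelta p y : whittaker_vector E a y ->
  (E - a%:A) *: (peval p H *: y) = peval (a *: pdelta p) H *: y.
Proof.
move=> Ey; rewrite scalerA mulrBl (peval_shiftl _ mulEH) scalerBl -scalerA Ey scalerA.
by rewrite mulr_algr mulr_algl pevalZ pevalB scalerBr scalerBl.
Qed.

Lemma whittaker_iter_pdelta d p y : whittaker_vector E a y ->
  (E - a%:A) ^+ d *: (peval p H *: y) = peval (a ^+ d *: iter d pdelta p) H *: y.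
Proof.
move=> Ey; elim: d => [|d IH]; first by rewrite !expr0 scale1r scale1r.
by rewrite exprS -scalerA IH whittaker_pdelta // pdeltaZ scalerA -exprS.
Qed.

Lemma whittaker_top_coef d p y : whittaker_vector E a y -> (size p <= d.+1)%N ->
  (E - a%:A) ^+ d *: (peval p H *: y) = (a ^+ d * ((-1) ^+ d * d`!%:R * p`_d))%:A *: y.
Proof. by move=> Ey sp; rewrite whittaker_iter_pdelta // iter_pdelta // pevalZ pevalC scalerA. Qed.

Definition hcoef_poly d (s : seq ({poly C} * nat)) := \sum_(pe <- s) pe.1`_d *: 'X^(pe.2).

Definition hlower d (s : seq ({poly C} * nat)) :=
  [seq (pe.1 - pe.1`_d *: 'X^d, pe.2) | pe : {poly C} * nat <- s].

Lemma peval_hcoef_poly d s x :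
  peval (hcoef_poly d s) x = \sum_(pe <- s) pe.1`_d *: x ^+ pe.2.
Proof.
rewrite /hcoef_poly; elim: s => [|pe s IH]; first by rewrite !big_nil peval0.
by rewrite !big_cons pevalD pevalZ pevalXn IH.
Qed.

Lemma eta_expansion_split d s :
  eta_expansion s = eta_expansion (hlower d s) + H ^+ d * peval (hcoef_poly d s) casimir_eta.
Proof.
rewrite peval_hcoef_poly /eta_expansion big_map mulr_sumr -big_split; apply: eq_bigr => pe _ /=.
by rewrite pevalB pevalZ pevalXn mulrBl -scalerAl scalerAr subrK.
Qed.

Lemma eta_expansion_eq0 s : hsize_le 0 s -> eta_expansion s = 0.
Proof.
move=> /allP s0; rewrite /eta_expansion big_seq big1 // => pe /s0.
by rewrite size_poly_leq0 => /eqP ->; rewrite peval0 mul0r.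
Qed.

Lemma whittaker_eta_expansion d s : hsize_le d.+1 s ->
  (E - a%:A) ^+ d *: (eta_expansion s *: w) =
  (a ^+ d * ((-1) ^+ d * d`!%:R))%:A *: (peval (hcoef_poly d s) casimir *: w).
Proof.
move=> /allP sz; rewrite peval_hcoef_poly /eta_expansion !scaler_suml !scaler_sumr.
apply: eq_big_seq => pe /sz sp.
have eta_w : casimir_eta ^+ pe.2 *: w = casimir ^+ pe.2 *: w.
  rewrite -(pevalXn pe.2 casimir_eta) -(pevalXn pe.2 casimir).
  exact: eta_part_whittaker Ew (eta_part_casimir _).
have Wk : whittaker_vector E a (casimir ^+ pe.2 *: w).
  apply: whittaker_vector_central Ew; rewrite -(pevalXn pe.2 casimir).
  exact/central_peval/casimir_central.
rewrite -scalerA eta_w whittaker_top_coef //.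
by rewrite !scalerA !mulr_algl scalerA !mulrA.
Qed.

Lemma size_hlower d s : hsize_le d.+1 s -> hsize_le d (hlower d s).
Proof. by move=> /allP sz; apply/allP => _ /mapP [pe /sz sp ->]; exact: size_sub_top. Qed.

Lemma eta_expansion_decomposition d s : hsize_le d s ->
  whittaker_vector E a (eta_expansion s *: w) ->
  exists v1 v2, AWV V E F H a v1 /\ Wset E F H a v2 /\ eta_expansion s = v1 + v2.
Proof.
elim: d s => [|d IH] s sz Ws.
  exists 0, 0; rewrite eta_expansion_eq0 // addr0.
  by split; [exact: lspan0 | split; [exact: Wset0 |]].
set z := peval (hcoef_poly d s) casimir; set b := peval (hcoef_poly d s) casimir_eta.
have zb : eta_part E F H a z b by exact: eta_part_casimir.
have cz : central z by apply: central_peval; exact: casimir_central.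
have v_split := eta_expansion_split d s; rewrite -/b in v_split.
have [d0 | d_gt0] := posnP d.
  exists 0, b; rewrite add0r v_split eta_expansion_eq0 ?d0 ?add0r ?expr0 ?mul1r; last first.
    by rewrite -d0; exact: size_hlower.
  by split; [exact: lspan0 | split => //; exists z].
have zw : z *: w = 0.
  apply: (@scale_alg_eq0 _ _ _ (a ^+ d * ((-1) ^+ d * d`!%:R))).
    by rewrite mulf_neq0 ?expf_neq0 // mulf_neq0 ?signr_eq0 // (pcharf0P _).1 // -lt0n fact_gt0.
  rewrite -whittaker_eta_expansion // -(prednK d_gt0) exprSr -scalerA scalerBl Ws subrr.
  exact: scaler0.
have bw : b *: w = 0 by rewrite (eta_part_whittaker Ew zb).
have [|v1 [v2 [W1 [W2 lower_eq]]]] := IH (hlower d s) (size_hlower sz).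
  by rewrite -[eta_expansion _](addrK (H ^+ d * b)) -v_split scalerBl -scalerA bw scaler0 subr0.
exists (v1 + H ^+ d * b), v2; split; last by split => //; rewrite v_split lower_eq addrAC.
apply: lspanD W1 (lspan_of _); exists (H ^+ d), b; split; first by exists 'X^d; rewrite pevalXn.
split => //; exists z; split => //; split => //; exact: annV_cyclic w_cyclic cz zw.
Qed.

Lemma whittaker_decomposition v : RFH F H v -> whittaker_vector E a (v *: w) ->
  exists v1 v2, AWV V E F H a v1 /\ Wset E F H a v2 /\ v = v1 + v2.
Proof.
move=> Sv; have [s ->] := RFH_eta_expansion Sv.
apply: (@eta_expansion_decomposition (\max_(pe <- s) size pe.1)).
by apply/allP => pe pe_s; exact: leq_bigmax_seq.
Qed.

Lemma Xset_whittaker v : Xset E F H a w v -> whittaker_vector E a (v *: w).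
Proof.
move=> [Sv Xv]; have [u1 [u2 [S1 S2 Ev]]] := E_RFH_decomposition Sv.
have Eeta : eta_part E F H a (peval 'X E * v) (u1 + a *: u2).
  split; first by apply: RFHD => //; exact: RFHZ.
  rewrite pevalX Ev opprD addrACA subrr add0r -mulr_algr -mulrBr; exact: RReta_lideal.
move: (Xv _ _ Eeta); rewrite hornerX scalerBl (eta_part_whittaker Ew Eeta) pevalX -scalerA.
by move/eqP; rewrite subr_eq0 -mulr_algl -scalerA => /eqP.
Qed.

Lemma RwFH_AWV v : RwFH F H w v -> AWV V E F H a v.
Proof.
move=> [Sv vw]; have [|v1 [v2 [W1 [[z [cz zv2]] vE]]]] := whittaker_decomposition Sv.
  by rewrite vw; exact: whittaker_vector0.
have v1w : v1 *: w = 0 by case: (AWV_RwFH Ew W1).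
have zw : z *: w = 0.
  by rewrite -(eta_part_whittaker Ew zv2); move: vw; rewrite vE scalerDl v1w add0r.
rewrite vE; apply: lspanD W1 (AWV_WVset _); exists z; split => //.
by split => //; exact: annV_cyclic w_cyclic cz zw.
Qed.

End WhittakerModule.
End Rf.

Theorem mainTheorem20 (R : realType) (A : algType R[i]) (f : {poly R[i]})
    (E F H : A) (a : R[i]) (V : lmodType A) (w : V) :
  is_Rf f E F H -> a != 0 -> cyclic_whittaker E a w ->
  [/\ (forall v : A, Xset E F H a w v <->
         exists v1 v2, AWV V E F H a v1 /\ Wset E F H a v2 /\ v = v1 + v2),
      (forall v : A, RwFH F H w v -> Xset E F H a w v) &
      (forall v : A, RwFH F H w v <-> AWV V E F H a v)].
Proof.
move=> Rf a_neq0 w_cyclic; have Ew : whittaker_vector E a w by case: w_cyclic.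
have C0 : [pchar R[i]] =i pred0 := pchar_num _.
have [G G_pdelta] := pdelta_surj C0 (- f).
split=> v.
- split=> [Xv | [v1 [v2 [W1 [W2 ->]]]]].
    have [Sv _] := Xv.
    exact: (whittaker_decomposition Rf G_pdelta C0 a_neq0 w_cyclic Sv
             (Xset_whittaker Rf w_cyclic Xv)).
  have [S1 v1w] := AWV_RwFH Ew W1; have [S2 v2w] := Wset_whittaker Ew W2.
  by apply: Xset_of_whittaker Ew (RFHD S1 S2) _; rewrite scalerDl v1w add0r.
- by move=> [Sv vw]; apply: Xset_of_whittaker Ew Sv _; rewrite vw; exact: whittaker_vector0.
- by split; [apply: (RwFH_AWV Rf G_pdelta C0 a_neq0 w_cyclic) | exact: AWV_RwFH Ew].
Qed.
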